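(* Assume that $d_k < \sqrt{2}\,(p_k)^{1/2}$ for every integer $k\geq 1$ with $k\neq 4$. Then for every $n\geq 1$, $p_{n+2} < (p_n+1) + 2\sqrt2\,(p_n)^{1/2}$; that is, there are at least two primes greater than $p_n$ and less than $p_n + 1 + 2\sqrt{2p_n} = (\sqrt{p_n}+\sqrt2)^2 - 1$.
   Context: $p_k$ denotes the $k$th prime ($p_1=2$) and $d_k := p_{k+1}-p_k$. *)

From mathcomp Require Import all_boot.
From Stdlib Require Import Reals.

Set Implicit Arguments.
Unset Strict Implicit.
Unset Printing Implicit Defensive.

Lemma exists_prime_above (m : nat) : exists p, (m < p) && prime p.
Proof. by case: (prime_above m) => p H1 H2; exists p; rewrite H1 H2. Qed.

Definition next_prime (m : nat) : nat := ex_minn (exists_prime_above m).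

(* nth_prime k = p_k, with p_1 = 2 (p_0 = 1 is an unused dummy value). *)
Fixpoint nth_prime (k : nat) : nat :=
  match k with
  | 0 => 1
  | k'.+1 => next_prime (nth_prime k')
  end.

Definition prime_gap (k : nat) : nat := nth_prime k.+1 - nth_prime k.

From mathcomp Require Import all_boot.
From Stdlib Require Import Reals Lra.

(* Write [s = sqrt (2 p_n)].  From [d_n < s] we get
   [2 p_(n+1) = s^2 + 2 d_n < (s + 1)^2], so [d_(n+1) < sqrt (2 p_(n+1)) < s + 1]
   and [p_(n+2) = p_n + d_n + d_(n+1) < p_n + 1 + 2 s].  The hypothesis is not
   available for [k = 4], so the two cases [n = 3, 4] which use [d_4] are checked
   by hand: [p_5 = 11 < 6 + 2 sqrt 10] and [p_6 = 13 < 8 + 2 sqrt 14]. *)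

Lemma next_prime_gt m : (m < next_prime m)%N.
Proof. by rewrite /next_prime; case: ex_minnP => p /andP []. Qed.

Lemma next_primeE m p :
  (m < p)%N -> prime p -> all (predC prime) (iota m.+1 (p - m.+1)) ->
  next_prime m = p.
Proof.
move=> lt_mp pr_p /allP no_prime; rewrite /next_prime.
case: ex_minnP => r /andP [lt_mr pr_r] min_r.
apply/eqP; rewrite eqn_leq min_r ?lt_mp ?pr_p // leqNgt; apply/negP => lt_rp.
have r_mid : r \in iota m.+1 (p - m.+1) by rewrite mem_iota subnKC // lt_mr lt_rp.
by have := no_prime r r_mid; rewrite /= pr_r.
Qed.

Lemma nth_primeS k : nth_prime k.+1 = next_prime (nth_prime k).
Proof. by []. Qed.

Lemma nth_primeS_gap k : nth_prime k.+1 = (nth_prime k + prime_gap k)%N.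
Proof. by rewrite /prime_gap subnKC // ltnW // next_prime_gt. Qed.

Lemma nth_prime3 : nth_prime 3 = 5%N.
Proof.
have p1 : nth_prime 1 = 2%N by apply: next_primeE.
have p2 : nth_prime 2 = 3%N by rewrite nth_primeS p1; apply: next_primeE.
by rewrite nth_primeS p2; apply: next_primeE.
Qed.

Lemma nth_prime4 : nth_prime 4 = 7%N.
Proof. by rewrite nth_primeS nth_prime3; apply: next_primeE. Qed.

Lemma nth_prime5 : nth_prime 5 = 11%N.
Proof. by rewrite nth_primeS nth_prime4; apply: next_primeE. Qed.

Lemma nth_prime6 : nth_prime 6 = 13%N.
Proof. by rewrite nth_primeS nth_prime5; apply: next_primeE. Qed.

Open Scope R_scope.

Lemma sqrt2_mul_sqrt x : 0 <= x -> sqrt 2 * sqrt x = sqrt (2 * x).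
Proof. by move=> x_ge0; rewrite sqrt_mult //; lra. Qed.

Lemma lt_2sqrt2_sqrt c x : c ^ 2 < 8 * x -> c < 2 * sqrt 2 * sqrt x.
Proof.
move=> c2_lt.
have x_gt0 : 0 < x by nra.
have t_ge0 : 0 <= 2 * sqrt 2 * sqrt x.
  by apply: Rmult_le_pos; [apply: Rmult_le_pos; [lra | apply: sqrt_pos] | apply: sqrt_pos].
have t2 : (2 * sqrt 2 * sqrt x) ^ 2 = 8 * x.
  by rewrite !Rpow_mult_distr !pow2_sqrt; lra.
apply: Rnot_le_lt => le_tc.
by have := pow_incr _ _ 2 (conj t_ge0 le_tc); lra.
Qed.

Lemma sqrt_2add_lt_succ x a :
  0 <= x -> 0 <= a -> a < sqrt (2 * x) -> sqrt (2 * (x + a)) < sqrt (2 * x) + 1.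
Proof.
move=> x_ge0 a_ge0 a_lt; set s := sqrt (2 * x) in a_lt *.
have s2 : s ^ 2 = 2 * x by rewrite /s pow2_sqrt //; lra.
rewrite -(sqrt_pow2 (s + 1)); last by rewrite /s; have := sqrt_pos (2 * x); lra.
by apply: sqrt_lt_1_alt; nra.
Qed.

Lemma two_gaps_lt x a b :
  0 <= x -> 0 <= a ->
  a < sqrt 2 * sqrt x -> b < sqrt 2 * sqrt (x + a) ->
  a + b < 1 + 2 * sqrt 2 * sqrt x.
Proof.
move=> x_ge0 a_ge0; rewrite Rmult_assoc !sqrt2_mul_sqrt; try lra.
by move=> a_lt b_lt; have := sqrt_2add_lt_succ x a x_ge0 a_ge0 a_lt; lra.
Qed.

Theorem theorem2p14 :
  (forall k : nat, (1 <= k)%nat -> (k <> 4)%nat ->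
     INR (prime_gap k) < sqrt 2 * sqrt (INR (nth_prime k))) ->
  forall n : nat, (1 <= n)%nat ->
    INR (nth_prime (n + 2)%nat) < (INR (nth_prime n) + 1) + 2 * sqrt 2 * sqrt (INR (nth_prime n)).
Proof.
move=> gap_lt n n_ge1; rewrite addn2.
case: (n =P 3%nat) => [-> | n_ne3].
  rewrite nth_prime5 nth_prime3 !INR_IZR_INZ /=.
  suff : 5 < 2 * sqrt 2 * sqrt 5 by lra.
  by apply: lt_2sqrt2_sqrt; lra.
case: (n =P 4%nat) => [-> | n_ne4].
  rewrite nth_prime6 nth_prime4 !INR_IZR_INZ /=.
  suff : 5 < 2 * sqrt 2 * sqrt 7 by lra.
  by apply: lt_2sqrt2_sqrt; lra.
have a_lt := gap_lt n n_ge1 n_ne4.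
have b_lt := gap_lt n.+1 isT (fun e => n_ne3 (succn_inj e)).
rewrite !nth_primeS_gap !plus_INR in b_lt *.
by have := two_gaps_lt _ _ _ (pos_INR _) (pos_INR _) a_lt b_lt; lra.
Qed.
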